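(* Consider the Generalized Stochastic Blockmodel with $p>q$ in which all true clusters have size exactly $K$, every in-cluster pair has edge probability exactly $p$ and every other pair (different clusters or involving an outlier) has edge probability exactly $q$, and where $K=\Theta(n)$ and $n_2=\Theta(n_1)$. Then there is an absolute constant $c_2>0$ such that for all sufficiently large $n$: if some algorithm (a measurable function of the adjacency matrix $A$) recovers the true clusters correctly with probability at least $\tfrac34$ (for every possible true clustering), then $$\frac{p-q}{\sqrt{p(1-q)}}\ \ge\ \frac{c_2}{\sqrt{n}}.$$
   Context: Generalized Stochastic Blockmodel: there are $n=n_1+n_2$ nodes, split into a set $V_1$ of $n_1$ nodes and a set $V_2$ of $n_2$ outlier nodes; $V_1$ is partitioned into $r$ disjoint true clusters. Edges between distinct pairs are drawn independently, with probability $p$ for pairs in the same true cluster and probability $q$ for pairs in different clusters or with at least one node in $V_2$. $A$ is the symmetric $0/1$ adjacency matrix. The recovery task is to output the true clusters given $A$. *)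

From HB Require Import structures.
From mathcomp Require Import all_boot all_order all_algebra.
Set Implicit Arguments. Unset Strict Implicit. Unset Printing Implicit Defensive.
Import Order.TTheory GRing.Theory Num.Theory.
Local Open Scope ring_scope.

(* A labelling of the n nodes: [Some k] = node in true cluster k,
   [None] = outlier (node of V2). *)
Definition cluster (n r : nat) (sigma : {ffun 'I_n -> option 'I_r}) (k : 'I_r)
  : {set 'I_n} := [set i | sigma i == Some k].

Definition true_clusters (n r : nat) (sigma : {ffun 'I_n -> option 'I_r})
  : {set {set 'I_n}} := [set cluster sigma k | k : 'I_r].

Definition gsbm_config (n r K n2 : nat) (sigma : {ffun 'I_n -> option 'I_r}) : Prop :=
  (forall k : 'I_r, #|cluster sigma k| = K) /\ #|[set i | sigma i == None]| = n2.

Definition edge_prob (R : numDomainType) (n r : nat)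
  (sigma : {ffun 'I_n -> option 'I_r}) (p q : R) (i j : 'I_n) : R :=
  if (sigma i != None) && (sigma i == sigma j) then p else q.

Definition is_adj (n : nat) (A : 'M[bool]_n) : bool :=
  [forall i, ~~ A i i] && [forall i, forall j, A i j == A j i].

Definition gsbm_prob (R : numDomainType) (n r : nat)
  (sigma : {ffun 'I_n -> option 'I_r}) (p q : R) (A : 'M[bool]_n) : R :=
  if is_adj A then
    \prod_(i : 'I_n) \prod_(j : 'I_n | (i < j)%N)
      (if A i j then edge_prob sigma p q i j else 1 - edge_prob sigma p q i j)
  else 0.

Definition success_prob (R : numDomainType) (n r : nat)
  (sigma : {ffun 'I_n -> option 'I_r}) (p q : R)
  (f : 'M[bool]_n -> {set {set 'I_n}}) : R :=
  \sum_(A : 'M[bool]_n | f A == true_clusters sigma) gsbm_prob sigma p q A.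

(* Le Cam's two-point method.  Split the nodes into consecutive blocks to get a
   labelling [sigma], and let [sigma'] be [sigma] with one clustered node and one
   outlier swapped: their true clusters differ, so an algorithm succeeding with
   probability 3/4 under both separates two disjoint events of mass >= 3/4, which
   forces the Bhattacharyya coefficient [\sum_A sqrt (P A) * sqrt (P' A)] below
   13/15.  Edges are independent, so this coefficient is the product over pairs of
   the affinities [sqrt a * sqrt b + sqrt (1 - a) * sqrt (1 - b)] of the edge
   probabilities; only the at most 4n pairs touching the swapped nodes have
   affinity below 1, each by at most (p - q)^2 / (p (1 - q)).  Hence
   (p - q)^2 / (p (1 - q)) >= 1 / (30 n). *)

From HB Require Import structures.
From mathcomp Require Import all_boot all_order all_algebra.
From mathcomp Require Import perm zify ring lra.
Import Order.TTheory GRing.Theory Num.Theory.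
Set Implicit Arguments. Unset Strict Implicit. Unset Printing Implicit Defensive.

Lemma card_ord_range n m c : m + c <= n ->
  #|[set i : 'I_n | m <= i < m + c]| = c.
Proof.
move=> mcn; have lt_n (j : 'I_c) : m + j < n by have := ltn_ord j; lia.
have -> : [set i : 'I_n | m <= i < m + c] = [set Ordinal (lt_n j) | j : 'I_c].
  apply/setP => i; rewrite inE; apply/idP/imsetP => [/andP[mi ic]|[j _ ->]] /=.
    have lt_c : i - m < c by lia.
    by exists (Ordinal lt_c) => //; apply: val_inj => /=; lia.
  by have := ltn_ord j; lia.
by rewrite card_imset ?card_ord // => j1 j2 [] /addnI /val_inj.
Qed.

Lemma insub_eq_some r x (k : 'I_r) : (insub x == Some k) = (x == k).
Proof.
case: insubP => [y _ <-|x_ge] //=.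
by apply/esym/eqP => x_eq; rewrite x_eq ltn_ord in x_ge.
Qed.

Lemma insub_eq_none r x : (insub x == None :> option 'I_r) = (r <= x).
Proof. by case: insubP => [y x_lt _|x_ge]; rewrite leqNgt ?x_lt ?x_ge. Qed.

Definition block_labelling (n r K : nat) : {ffun 'I_n -> option 'I_r} :=
  [ffun i : 'I_n => insub (i %/ K)].

Lemma block_labelling_config n r K n2 : 0 < K -> n = r * K + n2 ->
  gsbm_config K n2 (block_labelling n r K).
Proof.
move=> K_gt0 ->; split => [k|].
  have -> : cluster (block_labelling _ r K) k
            = [set i : 'I_(r * K + n2) | k * K <= i < k * K + K].
    apply/setP => i; rewrite !inE ffunE insub_eq_some.
    by apply/eqP/andP => [<-|[]]; [split|]; nia.
  by rewrite card_ord_range //; have := ltn_ord k; nia.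
have -> : [set i | block_labelling _ r K i == None]
          = [set i : 'I_(r * K + n2) | r * K <= i < r * K + n2].
  by apply/setP => i; rewrite !inE ffunE insub_eq_none leq_divRL // ltn_ord andbT.
exact: card_ord_range.
Qed.

Definition relabel (n r : nat) (s : {perm 'I_n}) (sigma : {ffun 'I_n -> option 'I_r})
  : {ffun 'I_n -> option 'I_r} := [ffun i => sigma (s i)].

Lemma relabel_config n r K n2 (s : {perm 'I_n}) (sigma : {ffun 'I_n -> option 'I_r}) :
  gsbm_config K n2 sigma -> gsbm_config K n2 (relabel s sigma).
Proof.
move=> [cardK cardn2]; split => [k|].
  have -> : cluster (relabel s sigma) k = s @^-1: cluster sigma k.
    by apply/setP => i; rewrite !inE ffunE.
  by rewrite card_preimset ?cardK //; apply: perm_inj.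
have -> : [set i | relabel s sigma i == None] = s @^-1: [set i | sigma i == None].
  by apply/setP => i; rewrite !inE ffunE.
by rewrite card_preimset //; apply: perm_inj.
Qed.

Lemma true_clusters_swap n r (sigma : {ffun 'I_n -> option 'I_r}) u v k :
  sigma u = Some k -> sigma v = None ->
  true_clusters sigma != true_clusters (relabel (tperm u v) sigma).
Proof.
move=> su sv; apply/eqP => eq_tc.
have : cluster sigma k \in true_clusters (relabel (tperm u v) sigma).
  by rewrite -eq_tc imset_f.
case/imsetP => k' _ /setP/(_ u).
by rewrite !inE ffunE tpermL su sv eqxx.
Qed.

Lemma exists_swapped_configs n r K n2 :
  0 < K -> 0 < r -> 0 < n2 -> n = r * K + n2 ->
  exists (sigma sigma' : {ffun 'I_n -> option 'I_r}) (u v : 'I_n),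
    [/\ gsbm_config K n2 sigma, gsbm_config K n2 sigma',
        true_clusters sigma != true_clusters sigma' &
        forall i, i != u -> i != v -> sigma' i = sigma i].
Proof.
move=> K_gt0 r_gt0 n2_gt0 n_eq.
have u_lt : 0 < n by lia.
have v_lt : r * K < n by lia.
pose sigma := block_labelling n r K.
pose u := Ordinal u_lt; pose v := Ordinal v_lt.
exists sigma, (relabel (tperm u v) sigma), u, v; split.
- exact: block_labelling_config.
- exact/relabel_config/block_labelling_config.
- apply: (@true_clusters_swap _ _ _ _ _ (Ordinal r_gt0)); apply/eqP.
    by rewrite ffunE insub_eq_some div0n.
  by rewrite ffunE insub_eq_none mulnK.
- by move=> i iu iv; rewrite ffunE tpermD // eq_sym.
Qed.

Local Open Scope ring_scope.

Definition upper_part n (A : 'M[bool]_n) : 'M[bool]_n :=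
  \matrix_(i, j) ((i < j)%N && A i j).

Definition symmetrize n (U : 'M[bool]_n) : 'M[bool]_n :=
  \matrix_(i, j) if (i < j)%N then U i j else if (j < i)%N then U j i else false.

Definition strictly_upper n (U : 'M[bool]_n) : bool :=
  [forall i, forall j, U i j ==> (i < j)%N].

Lemma strictly_upper_part n (A : 'M[bool]_n) : strictly_upper (upper_part A).
Proof. by apply/forallP=> i; apply/forallP=> j; rewrite mxE; apply/implyP => /andP[]. Qed.

Lemma upper_partK n (A : 'M[bool]_n) : is_adj A -> symmetrize (upper_part A) = A.
Proof.
case/andP=> /forallP loopless /forallP sym; apply/matrixP=> i j; rewrite !mxE.
case: (ltngtP i j) => [|ji|/val_inj ->]; rewrite ?mxE ?ji //=.
  exact: (eqP (forallP (sym j) i)).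
by rewrite (negbTE (loopless j)).
Qed.

Lemma symmetrize_adj n (U : 'M[bool]_n) : is_adj (symmetrize U).
Proof.
apply/andP; split; first by apply/forallP=> i; rewrite mxE ltnn.
by apply/forallP=> i; apply/forallP=> j; rewrite !mxE; case: ltngtP.
Qed.

Lemma symmetrizeK n (U : 'M[bool]_n) : strictly_upper U -> upper_part (symmetrize U) = U.
Proof.
move=> /forallP U_up; apply/matrixP=> i j; rewrite !mxE; case: ltnP => //= ji.
by apply/esym/negbTE/negP => /(implyP (forallP (U_up i) j)); rewrite ltnNge ji.
Qed.

Lemma sum_adj_upper (R : nmodType) n (F : 'M[bool]_n -> R) :
  \sum_(A | is_adj A) F A = \sum_(U | strictly_upper U) F (symmetrize U).
Proof.
rewrite (reindex_onto (@symmetrize n) (@upper_part n)) /=; last exact: upper_partK.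
apply: eq_big => U; last by [].
apply/idP/idP => [/andP[_ /eqP <-]|U_up]; first exact: strictly_upper_part.
by rewrite symmetrize_adj symmetrizeK // eqxx.
Qed.

Lemma sum_strictly_upper_prod (R : comPzSemiRingType) n (h : 'I_n -> 'I_n -> bool -> R) :
  \sum_(U | strictly_upper U) \prod_(i : 'I_n) \prod_(j : 'I_n | (i < j)%N) h i j (U i j)
  = \prod_(i : 'I_n) \prod_(j : 'I_n | (i < j)%N) (h i j true + h i j false).
Proof.
pose F (x : 'I_n * 'I_n) (b : bool) : R :=
  if (x.1 < x.2)%N then h x.1 x.2 b else if b then 0 else 1.
have prodF (U : 'M[bool]_n) : \prod_x F x (U x.1 x.2) =
    if strictly_upper U then \prod_(i : 'I_n) \prod_(j : 'I_n | (i < j)%N) h i j (U i j)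
    else 0.
  case: ifPn => [/forallP U_up|/forallPn[i /forallPn[j]]]; last first.
    by rewrite negb_imply => /andP[Uij ji]; rewrite (bigD1 (i, j)) //= /F /= (negbTE ji) Uij mul0r.
  rewrite (bigID (fun x : 'I_n * 'I_n => (x.1 < x.2)%N)) /= [X in _ * X]big1 ?mulr1; last first.
    move=> [i j] /= ji; rewrite /F /= (negbTE ji).
    by case: (boolP (U i j)) => // /(implyP (forallP (U_up i) j)); rewrite (negbTE ji).
  by rewrite pair_big_dep; apply: eq_bigr => [[i j]] /= ij; rewrite /F /= ij.
transitivity (\sum_(f : {ffun 'I_n * 'I_n -> bool}) \prod_x F x (f x)).
  rewrite big_mkcond /= (reindex (@Matrix bool n n)) /=; last first.
    by exists (@mx_val bool n n) => // [[f]].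
  by apply: eq_bigr => f _; rewrite -prodF; apply: eq_bigr => [[i j]].
rewrite -bigA_distr_bigA /= pair_big_dep /= [RHS]big_mkcond /=.
by apply: eq_bigr => [[i j]] _ /=; rewrite big_bool /F /=; case: ltnP; rewrite ?add0r.
Qed.

Lemma sum_adj_prod (R : comPzSemiRingType) n (h : 'I_n -> 'I_n -> bool -> R) :
  \sum_(A | is_adj A) \prod_(i : 'I_n) \prod_(j : 'I_n | (i < j)%N) h i j (A i j)
  = \prod_(i : 'I_n) \prod_(j : 'I_n | (i < j)%N) (h i j true + h i j false).
Proof.
rewrite sum_adj_upper -sum_strictly_upper_prod; apply: eq_bigr => U _.
by apply: eq_bigr => i _; apply: eq_bigr => j ij; rewrite mxE ij.
Qed.

Section Affinity.
Variable R : rcfType.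
Implicit Types a b p q : R.

Definition affinity a b :=
  Num.sqrt a * Num.sqrt b + Num.sqrt (1 - a) * Num.sqrt (1 - b).

Lemma affinityC a b : affinity a b = affinity b a.
Proof. by rewrite /affinity mulrC [X in _ + X]mulrC. Qed.

Lemma affinity_id a : 0 <= a <= 1 -> affinity a a = 1.
Proof. by move=> a01; rewrite /affinity -!expr2 !sqr_sqrtr; lra. Qed.

Lemma affinity_ge0_le1 a b : 0 <= a <= 1 -> 0 <= b <= 1 -> 0 <= affinity a b <= 1.
Proof.
move=> a01 b01; rewrite /affinity.
have [sa_ge0 sb_ge0] := (sqrtr_ge0 a, sqrtr_ge0 b).
have [sa'_ge0 sb'_ge0] := (sqrtr_ge0 (1 - a), sqrtr_ge0 (1 - b)).
have sa2 : Num.sqrt a ^+ 2 = a by rewrite sqr_sqrtr //; lra.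
have sb2 : Num.sqrt b ^+ 2 = b by rewrite sqr_sqrtr //; lra.
have sa'2 : Num.sqrt (1 - a) ^+ 2 = 1 - a by rewrite sqr_sqrtr //; lra.
have sb'2 : Num.sqrt (1 - b) ^+ 2 = 1 - b by rewrite sqr_sqrtr //; lra.
have := sqr_ge0 (Num.sqrt a - Num.sqrt b).
have := sqr_ge0 (Num.sqrt (1 - a) - Num.sqrt (1 - b)).
rewrite !sqrrB; nra.
Qed.

Lemma sqr_sub_sqrt_le a b : 0 <= a -> 0 <= b ->
  (Num.sqrt a - Num.sqrt b) ^+ 2 * a <= (a - b) ^+ 2.
Proof.
move=> a_ge0 b_ge0.
have -> : (a - b) ^+ 2 = (Num.sqrt a - Num.sqrt b) ^+ 2 * (Num.sqrt a + Num.sqrt b) ^+ 2.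
  by rewrite -exprMn -subr_sqr !sqr_sqrtr.
apply: ler_wpM2l; first exact: sqr_ge0.
rewrite -{1}(sqr_sqrtr a_ge0) ler_sqr ?nnegrE ?addr_ge0 ?sqrtr_ge0 //.
by rewrite lerDl sqrtr_ge0.
Qed.

Lemma one_sub_affinity_le p q : 0 <= p <= 1 -> 0 <= q <= 1 ->
  (1 - affinity p q) * (p * (1 - q)) <= (p - q) ^+ 2.
Proof.
move=> p01 q01.
have hellinger : 1 - affinity p q =
    ((Num.sqrt p - Num.sqrt q) ^+ 2 + (Num.sqrt (1 - q) - Num.sqrt (1 - p)) ^+ 2) / 2%:R.
  rewrite /affinity !sqrrB !sqr_sqrtr; lra.
set D := (p - q) ^+ 2.
have D_ge0 : 0 <= D by apply: sqr_ge0.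
have h1 : (Num.sqrt p - Num.sqrt q) ^+ 2 * p * (1 - q) <= D * (1 - q).
  by apply: ler_wpM2r; [lra | apply: sqr_sub_sqrt_le; lra].
have h2 : (Num.sqrt (1 - q) - Num.sqrt (1 - p)) ^+ 2 * (1 - q) * p <= D * p.
  apply: ler_wpM2r; first lra.
  by rewrite /D (_ : p - q = 1 - q - (1 - p)); [apply: sqr_sub_sqrt_le | ring]; lra.
have h3 : D * (1 - q + p) <= D * 2%:R by apply: ler_wpM2l => //; lra.
rewrite hellinger; nra.
Qed.

Definition snr2 p q := (p - q) ^+ 2 / (p * (1 - q)).

Lemma one_sub_affinity_snr2 p q a b : 0 <= q -> q < p -> p <= 1 ->
  a \in [:: p; q] -> b \in [:: p; q] -> 1 - affinity a b <= snr2 p q.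
Proof.
move=> q_ge0 qp p_le1 a_pq b_pq.
have pq_gt0 : 0 < p * (1 - q) by apply: mulr_gt0; lra.
have snr2_ge0 : 0 <= snr2 p q by rewrite divr_ge0 ?sqr_ge0 ?ltW.
have key : 1 - affinity p q <= snr2 p q.
  by rewrite ler_pdivlMr //; apply: one_sub_affinity_le; lra.
by move: a_pq b_pq; rewrite !inE => /orP[]/eqP-> /orP[]/eqP->;
  rewrite ?affinity_id ?subrr // 1?affinityC //; lra.
Qed.

End Affinity.

Section Amplitude.
Variables (R : rcfType) (n : nat).
Implicit Types e : 'I_n -> 'I_n -> R.

Definition amplitude e (A : 'M[bool]_n) : R :=
  if is_adj A then \prod_(i : 'I_n) \prod_(j : 'I_n | (i < j)%N)
    Num.sqrt (if A i j then e i j else 1 - e i j)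
  else 0.

Lemma amplitude_sqr e A : (forall i j, 0 <= e i j <= 1) ->
  amplitude e A ^+ 2 = if is_adj A then \prod_(i : 'I_n) \prod_(j : 'I_n | (i < j)%N)
    (if A i j then e i j else 1 - e i j) else 0.
Proof.
move=> e01; rewrite /amplitude; case: (is_adj A); last by rewrite expr0n.
rewrite -prodrXl; apply: eq_bigr => i _; rewrite -prodrXl; apply: eq_bigr => j _.
by rewrite sqr_sqrtr //; case: (A i j); have := e01 i j; lra.
Qed.

Lemma sum_amplitudeM e e' : \sum_A amplitude e A * amplitude e' A =
  \prod_(i : 'I_n) \prod_(j : 'I_n | (i < j)%N) affinity (e i j) (e' i j).
Proof.
rewrite (bigID (@is_adj n)) /= [X in _ + X]big1 ?addr0; last first.
  by move=> A /negbTE adjA; rewrite /amplitude adjA mul0r.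
rewrite -(sum_adj_prod (fun i j (b : bool) =>
  Num.sqrt (if b then e i j else 1 - e i j) * Num.sqrt (if b then e' i j else 1 - e' i j))).
apply: eq_bigr => A adjA; rewrite /amplitude adjA -big_split.
by apply: eq_bigr => i _; rewrite -big_split.
Qed.

Lemma sum_amplitude_sqr e : (forall i j, 0 <= e i j <= 1) -> \sum_A amplitude e A ^+ 2 = 1.
Proof.
move=> e01; under eq_bigr do rewrite expr2.
by rewrite sum_amplitudeM big1 // => i _; rewrite big1 // => j _; rewrite affinity_id.
Qed.

End Amplitude.

Lemma edge_prob_ge0_le1 (R : realDomainType) n r (sigma : {ffun 'I_n -> option 'I_r})
    (p q : R) i j :
  0 <= q -> q <= p -> p <= 1 -> 0 <= edge_prob sigma p q i j <= 1.
Proof. by rewrite /edge_prob; case: ifP; lra. Qed.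

Lemma edge_prob_in (R : numDomainType) n r (sigma : {ffun 'I_n -> option 'I_r})
    (p q : R) i j :
  edge_prob sigma p q i j \in [:: p; q].
Proof. by rewrite /edge_prob; case: ifP; rewrite !inE eqxx ?orbT. Qed.

Lemma success_prob_amplitude (R : rcfType) n r (sigma : {ffun 'I_n -> option 'I_r})
    (p q : R) (f : 'M[bool]_n -> {set {set 'I_n}}) :
  0 <= q -> q <= p -> p <= 1 ->
  success_prob sigma p q f =
    \sum_(A | f A == true_clusters sigma) amplitude (edge_prob sigma p q) A ^+ 2.
Proof.
move=> q_ge0 qp p_le1; apply: eq_bigr => A _.
by rewrite amplitude_sqr // => i j; apply: edge_prob_ge0_le1.
Qed.

(* Summing the pointwise bound
   [1_E x^2 + 1_E' y^2 <= 25/16 (x^2 + y^2) - 15/8 x y]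
   gives [3/2 <= 25/8 - 15/8 <x, y>]. *)
Lemma disjoint_masses_inner_le (R : realFieldType) (T : finType) (x y : T -> R)
    (E E' : pred T) :
  \sum_t x t ^+ 2 = 1 -> \sum_t y t ^+ 2 = 1 ->
  (forall t, E t -> E' t -> False) ->
  3%:R / 4%:R <= \sum_(t | E t) x t ^+ 2 -> 3%:R / 4%:R <= \sum_(t | E' t) y t ^+ 2 ->
  15%:R * \sum_t x t * y t <= 13%:R.
Proof.
move=> x_unit y_unit EE' x_mass y_mass.
have pointwise t : (if E t then x t ^+ 2 else 0) + (if E' t then y t ^+ 2 else 0) <=
    25%:R / 16%:R * x t ^+ 2 + 25%:R / 16%:R * y t ^+ 2 - 15%:R / 8%:R * (x t * y t).
  case Et: (E t); case E't: (E' t); first by case: (EE' t).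
  - by have := sqr_ge0 (x t - y t - (x t + y t) / 4%:R); nra.
  - by have := sqr_ge0 (y t - x t - (x t + y t) / 4%:R); nra.
  - by have := sqr_ge0 (x t - y t); nra.
have := ler_sum (index_enum T) (fun t (_ : true) => pointwise t).
rewrite big_split sumrB !big_split /= -!big_mkcond -!mulr_sumr x_unit y_unit.
lra.
Qed.

Lemma prod_ge_1_sub_sum (R : realDomainType) (I : Type) (r : seq I) (P : pred I)
    (F : I -> R) :
  (forall i, P i -> 0 <= F i <= 1) ->
  1 - \sum_(i <- r | P i) (1 - F i) <= \prod_(i <- r | P i) F i.
Proof.
move=> F01; elim: r => [|a r IHr]; first by rewrite !big_nil subr0.
rewrite !big_cons; case: ifP => // Pa.
have := F01 a Pa.
have : 0 <= \sum_(i <- r | P i) (1 - F i).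
  by apply: sumr_ge0 => i /F01; lra.
have : 0 <= \prod_(i <- r | P i) F i.
  by apply: prodr_ge0 => i /F01; lra.
nra.
Qed.

Lemma sum_pairs_touching_le (R : realDomainType) n (u v : 'I_n) (z : 'I_n -> 'I_n -> R)
    (c : R) :
  (forall i j, 0 <= z i j <= c) ->
  (forall i j, i != u -> i != v -> j != u -> j != v -> z i j = 0) ->
  \sum_(i : 'I_n) \sum_(j : 'I_n | (i < j)%N) z i j <= c * (4 * n)%:R.
Proof.
move=> z0c z_out.
pose a (i : 'I_n) : R := (if i == u then 1 else 0) + (if i == v then 1 else 0).
have a_ge0 i : 0 <= a i by rewrite /a; do 2 case: ifP; lra.
have c_ge0 : 0 <= c by have := z0c u u; lra.
have a_ge1 i : i \in [:: u; v] -> 1 <= a i.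
  by rewrite !inE /a => /orP[]/eqP->; rewrite eqxx; case: ifP; lra.
have z_le i j : z i j <= c * (a i + a j).
  have := z0c i j; have := a_ge0 i; have := a_ge0 j.
  case: (boolP (i \in [:: u; v])) => [/a_ge1|]; first nra.
  case: (boolP (j \in [:: u; v])) => [/a_ge1|]; first nra.
  by rewrite !inE !negb_or => /andP[ju jv] /andP[iu iv]; rewrite z_out //; nra.
have sum_a : \sum_(i : 'I_n) a i = 2%:R.
  by rewrite big_split /= -!big_mkcond !big_pred1_eq.
apply: (@le_trans _ _ (\sum_(i : 'I_n) \sum_(j : 'I_n) c * (a i + a j))).
  apply: ler_sum => i _; rewrite [X in _ <= X](bigID (fun j : 'I_n => (i < j)%N)) /=.
  rewrite -[X in X <= _]addr0; apply: lerD; first by apply: ler_sum => j _.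
  by apply: sumr_ge0 => j _; apply: mulr_ge0 => //; apply: addr_ge0.
under eq_bigr do rewrite -mulr_sumr big_split /= sum_a sumr_const card_ord.
rewrite -mulr_sumr; apply: ler_wpM2l => //.
by rewrite big_split /= sumrMnl sum_a sumr_const card_ord -mulrnDl -natrD natrM mulr_natr.
Qed.

Section TwoConfigurations.
Variables (R : rcfType) (n r : nat) (sigma sigma' : {ffun 'I_n -> option 'I_r}) (u v : 'I_n).
Hypothesis sigma'E : forall i, i != u -> i != v -> sigma' i = sigma i.
Variables p q : R.
Hypotheses (q_ge0 : 0 <= q) (qp : q < p) (p_le1 : p <= 1).

Let e := edge_prob sigma p q.
Let e' := edge_prob sigma' p q.

Let e01 i j : 0 <= e i j <= 1.
Proof. by apply: edge_prob_ge0_le1 => //; apply: ltW. Qed.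

Let e'01 i j : 0 <= e' i j <= 1.
Proof. by apply: edge_prob_ge0_le1 => //; apply: ltW. Qed.

Lemma affinity_prod_swap_ge :
  1 - snr2 p q * (4 * n)%:R <=
    \prod_(i : 'I_n) \prod_(j : 'I_n | (i < j)%N) affinity (e i j) (e' i j).
Proof.
have aff01 i j : 0 <= affinity (e i j) (e' i j) <= 1 by apply: affinity_ge0_le1.
have row01 (i : 'I_n) : 0 <= \prod_(j : 'I_n | (i < j)%N) affinity (e i j) (e' i j) <= 1.
  by rewrite prodr_ge0 ?prodr_ile1 // => j _; have := aff01 i j; lra.
apply: le_trans (prod_ge_1_sub_sum _ (fun i _ => row01 i)).
have row_le (i : 'I_n) : 1 - \prod_(j : 'I_n | (i < j)%N) affinity (e i j) (e' i j)
              <= \sum_(j : 'I_n | (i < j)%N) (1 - affinity (e i j) (e' i j)).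
  by have := prod_ge_1_sub_sum (index_enum 'I_n) (fun j (_ : (i < j)%N) => aff01 i j); lra.
have pairs_le : \sum_(i : 'I_n) \sum_(j : 'I_n | (i < j)%N) (1 - affinity (e i j) (e' i j))
                <= snr2 p q * (4 * n)%:R.
  apply: (@sum_pairs_touching_le _ _ u v) => [i j|i j iu iv ju jv].
    by rewrite one_sub_affinity_snr2 ?edge_prob_in // andbT; have := aff01 i j; lra.
  have -> : e' i j = e i j by rewrite /e /e' /edge_prob !sigma'E.
  by rewrite affinity_id ?subrr.
by rewrite lerD2l lerN2; apply: le_trans pairs_le; apply: ler_sum.
Qed.

Lemma snr2_ge_of_two_configs (f : 'M[bool]_n -> {set {set 'I_n}}) :
  true_clusters sigma != true_clusters sigma' ->
  3%:R / 4%:R <= success_prob sigma p q f -> 3%:R / 4%:R <= success_prob sigma' p q f ->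
  1 <= 30%:R * (snr2 p q * n%:R).
Proof.
move=> tc_neq succ succ'.
have q_le_p := ltW qp.
rewrite !success_prob_amplitude // in succ succ'.
have disjoint A : f A == true_clusters sigma -> f A == true_clusters sigma' -> False.
  by move=> /eqP-> /eqP eq_tc; rewrite eq_tc eqxx in tc_neq.
have := disjoint_masses_inner_le (sum_amplitude_sqr e01) (sum_amplitude_sqr e'01)
  disjoint succ succ'.
have := affinity_prod_swap_ge.
rewrite sum_amplitudeM natrM; lra.
Qed.

End TwoConfigurations.

Lemma ler_div_sqrt (R : rcfType) (a b c d : R) : 0 <= a -> 0 < b -> 0 <= c -> 0 < d ->
  a ^+ 2 / b <= c ^+ 2 / d -> a / Num.sqrt b <= c / Num.sqrt d.
Proof.
move=> a_ge0 b_gt0 c_ge0 d_gt0 sqr_le.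
have [b_ge0 d_ge0] := (ltW b_gt0, ltW d_gt0).
by rewrite -ler_sqr ?nnegrE ?divr_ge0 ?sqrtr_ge0 // !expr_div_n !sqr_sqrtr.
Qed.

Unset Implicit Arguments.

Theorem theorem2 (R : rcfType) (kappa b1 b2 : R) :
  0 < kappa -> 0 < b1 -> b1 <= b2 ->
  exists c2 : R, 0 < c2 /\
  exists N : nat, forall (n r K n2 : nat),
    (N <= n)%N ->
    n = (r * K + n2)%N ->
    kappa * n%:R <= K%:R ->
    b1 * (r * K)%:R <= n2%:R -> n2%:R <= b2 * (r * K)%:R ->
    forall p q : R, 0 <= q -> q < p -> p <= 1 ->
    forall f : 'M[bool]_n -> {set {set 'I_n}},
      (forall sigma : {ffun 'I_n -> option 'I_r},
          gsbm_config K n2 sigma ->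
          3%:R / 4%:R <= success_prob sigma p q f) ->
      c2 / Num.sqrt n%:R <= (p - q) / Num.sqrt (p * (1 - q)).
Proof.
move=> kappa_gt0 b1_gt0 _; exists 6%:R^-1; split; first lra.
exists 1%N => n r K n2 n_gt0 n_eq K_ge b1_le n2_le p q q_ge0 qp p_le1 f succ.
have K_gt0 : (0 < K)%N.
  by rewrite -(ltr0n R); apply: lt_le_trans K_ge; rewrite mulr_gt0 ?ltr0n.
have r_gt0 : (0 < r)%N.
  case: (posnP r) => // r0.
  move: n2_le; rewrite r0 mul0n mulr0 lern0 => /eqP n2_0.
  by move: n_gt0; rewrite n_eq r0 n2_0.
have n2_gt0 : (0 < n2)%N.
  by rewrite -(ltr0n R); apply: lt_le_trans b1_le; rewrite mulr_gt0 ?ltr0n ?muln_gt0 ?r_gt0.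
have [sigma [sigma' [u [v [cfg cfg' tc_neq sigma'E]]]]] :=
  exists_swapped_configs K_gt0 r_gt0 n2_gt0 n_eq.
have snr2_ge :=
  snr2_ge_of_two_configs sigma'E q_ge0 qp p_le1 tc_neq (succ _ cfg) (succ _ cfg').
have pq_gt0 : 0 < p * (1 - q) by rewrite mulr_gt0 //; lra.
apply: ler_div_sqrt => //; [lra | by rewrite ltr0n | lra |].
rewrite -/(snr2 p q) ler_pdivrMr ?ltr0n // expr2; lra.
Qed.
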